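(* Let $n\ge 2$ and let $P$ be a partial $n$-Metric on a set $X$. Then for all $(x_1,\dots,x_n)\in X^n$, $(y_1,\dots,y_n)\in X^n$ and every $t\in\{1,\dots,n\}$, $$P(x_1,\dots,x_n)\le P(y_1,\dots,y_t,x_{t+1},\dots,x_n)+\sum_{j=1}^t\big[P(\langle y_j\rangle^{n-1},x_j)-P(\langle y_j\rangle^n)\big].$$
   Context: Notation: $\langle a\rangle^k$ denotes the $k$-tuple $(a,a,\dots,a)$, inserted into the argument list of a function. A partial $n$-Metric on $X$ is a function $P:X^n\to\mathbb{R}$ such that for all $x_1,\dots,x_n,a\in X$: (1) $P(\langle x_1\rangle^n)\le P(\langle x_1\rangle^{n-1},x_2)$; (2) $P(x_1,\dots,x_n)=P(x_{\pi(1)},\dots,x_{\pi(n)})$ for every permutation $\pi$ of $\{1,\dots,n\}$; (3) $P(\langle x_1\rangle^{n-1},x_2)=P(\langle x_1\rangle^n)$ and $P(\langle x_2\rangle^{n-1},x_1)=P(\langle x_2\rangle^n)$ if and only if $x_1=x_2$; (4) $P(x_1,\dots,x_n)\le P(x_1,\dots,x_{n-1},a)+P(\langle a\rangle^{n-1},x_n)-P(\langle a\rangle^n)$. *)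

From HB Require Import structures.
From mathcomp Require Import all_boot all_order all_algebra all_fingroup.
From mathcomp Require Import reals.
Set Implicit Arguments. Unset Strict Implicit. Unset Printing Implicit Defensive.
Import Order.TTheory GRing.Theory Num.Theory.
Local Open Scope ring_scope.

(* Points of X^n are finite functions 'I_n -> X; coordinate x_k is x (k-1). *)

Definition cst_tup (X : Type) (n : nat) (a : X) : {ffun 'I_n -> X} :=
  [ffun _ => a].

Definition cl_tup (X : Type) (n : nat) (a b : X) : {ffun 'I_n -> X} :=
  [ffun i : 'I_n => if val i == n.-1 then b else a].

Definition setlast (X : Type) (n : nat) (x : {ffun 'I_n -> X}) (a : X)
  : {ffun 'I_n -> X} :=
  [ffun i : 'I_n => if val i == n.-1 then a else x i].

Definition partial_nmetric (R : realType) (X : Type) (n : nat)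
  (P : {ffun 'I_n -> X} -> R) : Prop :=
  [/\ (forall x1 x2 : X, P (cst_tup n x1) <= P (cl_tup n x1 x2)),
      (forall (x : {ffun 'I_n -> X}) (s : 'S_n), P x = P [ffun i => x (s i)]),
      (forall x1 x2 : X,
          (P (cl_tup n x1 x2) = P (cst_tup n x1) /\
           P (cl_tup n x2 x1) = P (cst_tup n x2)) <-> x1 = x2) &
      (forall (x : {ffun 'I_n -> X}) (a : X) (l : 'I_n), val l = n.-1 ->
          P x <= P (setlast x a) + P (cl_tup n a (x l)) - P (cst_tup n a))].

From HB Require Import structures.
From mathcomp Require Import all_boot all_order all_algebra all_fingroup.
From mathcomp Require Import reals.
Set Implicit Arguments. Unset Strict Implicit. Unset Printing Implicit Defensive.
Import Order.TTheory GRing.Theory Num.Theory.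
Local Open Scope ring_scope.

(* By symmetry, axiom (4) may be applied at any coordinate j instead of the
   last one: replacing x_j by a costs at most P(<a>^(n-1), x_j) - P(<a>^n).
   Replacing x_1, ..., x_t by y_1, ..., y_t one coordinate at a time and
   adding up these costs gives the inequality. *)

Section Splice.

Variables (X : Type) (n : nat).

Definition splice (t : nat) (x y : {ffun 'I_n -> X}) : {ffun 'I_n -> X} :=
  [ffun i : 'I_n => if (val i < t)%N then y i else x i].

Lemma splice0 (x y : {ffun 'I_n -> X}) : splice 0 x y = x.
Proof. by apply/ffunP=> i; rewrite ffunE. Qed.

Lemma spliceS (t : nat) (lt_tn : (t < n)%N) (x y : {ffun 'I_n -> X}) :
  let j := Ordinal lt_tn in
  splice t.+1 x y = [ffun i => if i == j then y j else splice t x y i].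
Proof.
move=> j; apply/ffunP=> i; rewrite !ffunE ltnS -val_eqE /=.
by case: ltngtP => // eq_it; rewrite (_ : i = j) //; exact: val_inj.
Qed.

End Splice.

Lemma sum_ord_ltS (V : nmodType) (n t : nat) (lt_tn : (t < n)%N)
    (F : 'I_n -> V) :
  \sum_(j < n | (val j < t.+1)%N) F j
    = \sum_(j < n | (val j < t)%N) F j + F (Ordinal lt_tn).
Proof.
rewrite (bigD1 (Ordinal lt_tn)) //= addrC; congr (_ + _).
apply: eq_bigl => i; rewrite -val_eqE /= ltnS.
by case: ltngtP.
Qed.

Section PartialNMetric.

Variables (R : realType) (X : Type) (n : nat) (P : {ffun 'I_n -> X} -> R).
Hypothesis partial_nmetric_P : partial_nmetric P.

Lemma partial_nmetric_update (z : {ffun 'I_n -> X}) (j : 'I_n) (a : X) :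
  P z <= P [ffun i => if i == j then a else z i]
         + (P (cl_tup n a (z j)) - P (cst_tup n a)).
Proof.
case: partial_nmetric_P => _ P_perm _ P_last.
have lt_last : (n.-1 < n)%N by rewrite ltn_predL; exact: leq_ltn_trans (ltn_ord j).
pose l := Ordinal lt_last; pose s := tperm j l.
have sl : s l = j by rewrite tpermR.
have := P_last [ffun i => z (s i)] a l erefl.
rewrite ffunE sl -P_perm addrA; congr (_ <= _ + _ - _).
rewrite [RHS](P_perm _ s); congr P; apply/ffunP=> i; rewrite !ffunE.
by rewrite -{1}sl (inj_eq perm_inj).
Qed.

Lemma partial_nmetric_splice (x y : {ffun 'I_n -> X}) (t : nat) :
  (t <= n)%N ->
  P x <= P (splice t x y)
         + \sum_(j < n | (val j < t)%N)
             (P (cl_tup n (y j) (x j)) - P (cst_tup n (y j))).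
Proof.
elim: t => [_ | t IH lt_tn].
  by rewrite splice0 big_pred0 ?addr0.
apply: le_trans (IH (ltnW lt_tn)) _.
rewrite (sum_ord_ltS lt_tn) addrA addrAC lerD2r (spliceS lt_tn).
have := partial_nmetric_update (splice t x y) (Ordinal lt_tn) (y (Ordinal lt_tn)).
by rewrite ffunE ltnn.
Qed.

End PartialNMetric.

Theorem theorem2p9 (R : realType) (X : Type) (n : nat)
  (P : {ffun 'I_n -> X} -> R) :
  (2 <= n)%N -> partial_nmetric P ->
  forall (x y : {ffun 'I_n -> X}) (t : nat), (1 <= t <= n)%N ->
    P x <= P [ffun i : 'I_n => if (val i < t)%N then y i else x i]
           + \sum_(j < n | (val j < t)%N)
               (P (cl_tup n (y j) (x j)) - P (cst_tup n (y j))).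
Proof.
move=> _ partial_nmetric_P x y t /andP[_ le_tn].
exact: partial_nmetric_splice.
Qed.
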